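(* Let $n\ge 2$, $h=1/n$, $\Omega=(0,1)^2$, $f$ continuous on $[0,1]^2$, $g\in H^{1/2}(\partial\Omega)$. (i) For every $\kappa>0$, the seven-point finite difference scheme described in the context has exactly one solution $\{u_{k,\ell}\}$. (ii) The five-point scheme described in the context has exactly one solution. (iii) If in addition $f\le 0$ in $\Omega$, then for every $0<\kappa\le 4$ the solution of the seven-point scheme (and in particular the solution of the five-point scheme) satisfies $\max_{(x_k,y_\ell)\in\Omega_h}u_{k,\ell}\le\max_{(x_k,y_\ell)\in\partial\Omega_h}Q_bg(x_k,y_\ell)$, where $\Omega_h$ is the set of all grid points and $\partial\Omega_h$ the set of boundary grid points.
   Context: Grid: $x_k=(k-\frac12)h$, $y_\ell=(\ell-\frac12)h$ for $k,\ell\in\{\frac12,1,\frac32,\dots,n+\frac12\}$. Grid points are $(x_k,y_\ell)$ with one index an integer in $\{1,\dots,n\}$ and the other a half-integer in $\{\frac12,\dots,n+\frac12\}$ (midpoints of the edges of the uniform square partition); a grid point is a boundary grid point if its half-integer index is $\frac12$ or $n+\frac12$. $Q_bg$ at a boundary grid point is the average of $g$ over the boundary edge of length $h$ centered at that point. Seven-point scheme (parameter $\kappa>0$): unknowns $u_{k,\ell}$ at all grid points with $u_{k,\ell}=Q_bg(x_k,y_\ell)$ at boundary grid points, and $c_1u_{i+\frac32,j}+c_2u_{i+\frac12,j}+c_3u_{i-\frac12,j}+c_4(u_{i+1,j-\frac12}+u_{i+1,j+\frac12}+u_{i,j-\frac12}+u_{i,j+\frac12})=\frac{h^2}{2}f(x_{i+\frac12},y_j)$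 for $i\in\{1,\dots,n-1\}$, $j\in\{1,\dots,n\}$, $c_1u_{i,j+\frac32}+c_2u_{i,j+\frac12}+c_3u_{i,j-\frac12}+c_4(u_{i-\frac12,j+1}+u_{i+\frac12,j+1}+u_{i-\frac12,j}+u_{i+\frac12,j})=\frac{h^2}{2}f(x_i,y_{j+\frac12})$ for $i\in\{1,\dots,n\}$, $j\in\{1,\dots,n-1\}$, with $c_1=c_3=\frac{\kappa}{4}-1$, $c_2=\frac{\kappa}{2}+2$, $c_4=-\frac{\kappa}{4}$. Five-point scheme: the case $\kappa=4$, i.e. the same boundary condition and $\frac{4u_{i+\frac12,j}-u_{i+1,j-\frac12}-u_{i+1,j+\frac12}-u_{i,j-\frac12}-u_{i,j+\frac12}}{h^2}=\frac12f(x_{i+\frac12},y_j)$, $\frac{4u_{i,j+\frac12}-u_{i-\frac12,j+1}-u_{i+\frac12,j+1}-u_{i-\frac12,j}-u_{i+\frac12,j}}{h^2}=\frac12f(x_i,y_{j+\frac12})$ for the same index ranges. *)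

From HB Require Import structures.
From mathcomp Require Import all_boot all_order all_algebra.
From mathcomp Require Import all_classical all_reals all_analysis.
Set Implicit Arguments. Unset Strict Implicit. Unset Printing Implicit Defensive.
Import Order.TTheory GRing.Theory Num.Theory.
Import numFieldNormedType.Exports.
Local Open Scope classical_set_scope.
Local Open Scope ring_scope.

(* CONVENTION: grid indices are DOUBLED.  A paper index k in {1/2,1,...,n+1/2}
   is represented by the natural number K = 2k in {1,...,2n+1}.  Integer
   paper indices correspond to even K, half-integer ones to odd K. *)

Section Grid.
Variable R : realType.
Variable n : nat.

Definition hh : R := n%:R^-1.

Definition coord (K : nat) : R := (K%:R / 2 - 2^-1) * hh.

Definition int_idx (K : nat) : bool := [&& ~~ odd K, (2 <= K)%N & (K <= n.*2)%N].
Definition half_idx (K : nat) : bool := [&& odd K, (1 <= K)%N & (K <= n.*2.+1)%N].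

Definition is_grid (K L : nat) : bool :=
  (int_idx K && half_idx L) || (half_idx K && int_idx L).

Definition is_bnd (K L : nat) : bool :=
  (int_idx K && ((L == 1%N) || (L == n.*2.+1)))
  || (int_idx L && ((K == 1%N) || (K == n.*2.+1))).

Definition idx_range : seq nat := iota 0 (n.*2.+2).
Definition grid_pts : seq (nat * nat) :=
  [seq p <- [seq (a, b) | a <- idx_range, b <- idx_range] | is_grid p.1 p.2].
Definition bnd_pts : seq (nat * nat) :=
  [seq p <- [seq (a, b) | a <- idx_range, b <- idx_range] | is_bnd p.1 p.2].

(* average of F over [a, b] (Lebesgue integral), divided by h = b - a *)
Definition edge_avg (a b : R) (F : R -> R) : R :=
  fine (\int[@lebesgue_measure R]_(s in `[a, b]) (F s)%:E) / hh.

(* Q_b g at a boundary grid point (K, L): average of g over the boundary edge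
   of length h centered at (x_K, y_L).  g is given as a function on the plane;
   only its values on the boundary of the unit square are used. *)
Definition Qb (g : R -> R -> R) (K L : nat) : R :=
  if L == 1%N then
    edge_avg (coord K - hh / 2) (coord K + hh / 2) (fun s => g s 0)
  else if L == n.*2.+1 then
    edge_avg (coord K - hh / 2) (coord K + hh / 2) (fun s => g s 1)
  else if K == 1%N then
    edge_avg (coord L - hh / 2) (coord L + hh / 2) (fun s => g 0 s)
  else
    edge_avg (coord L - hh / 2) (coord L + hh / 2) (fun s => g 1 s).

(* Seven-point scheme with parameter kappa.  u K L is u_{K/2, L/2}. *)
Definition c1 (kappa : R) : R := kappa / 4 - 1.
Definition c2 (kappa : R) : R := kappa / 2 + 2.
Definition c3 (kappa : R) : R := kappa / 4 - 1.
Definition c4 (kappa : R) : R := - (kappa / 4).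

Definition bc_holds (g : R -> R -> R) (u : nat -> nat -> R) : Prop :=
  forall K L, is_bnd K L -> u K L = Qb g K L.

Definition seven_point (kappa : R) (f g : R -> R -> R) (u : nat -> nat -> R) : Prop :=
  bc_holds g u /\
  (* first family: i in {1..n-1}, j in {1..n}; point (i+1/2, j) *)
  (forall i j, (1 <= i <= n.-1)%N -> (1 <= j <= n)%N ->
     c1 kappa * u (i.*2 + 3)%N j.*2 + c2 kappa * u i.*2.+1 j.*2
     + c3 kappa * u i.*2.-1 j.*2
     + c4 kappa * (u i.*2.+2 j.*2.-1 + u i.*2.+2 j.*2.+1
                   + u i.*2 j.*2.-1 + u i.*2 j.*2.+1)
     = hh ^+ 2 / 2 * f (coord i.*2.+1) (coord j.*2)) /\
  (* second family: i in {1..n}, j in {1..n-1}; point (i, j+1/2) *)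
  (forall i j, (1 <= i <= n)%N -> (1 <= j <= n.-1)%N ->
     c1 kappa * u i.*2 (j.*2 + 3)%N + c2 kappa * u i.*2 j.*2.+1
     + c3 kappa * u i.*2 j.*2.-1
     + c4 kappa * (u i.*2.-1 j.*2.+2 + u i.*2.+1 j.*2.+2
                   + u i.*2.-1 j.*2 + u i.*2.+1 j.*2)
     = hh ^+ 2 / 2 * f (coord i.*2) (coord j.*2.+1)).

Definition five_point (f g : R -> R -> R) (u : nat -> nat -> R) : Prop :=
  bc_holds g u /\
  (forall i j, (1 <= i <= n.-1)%N -> (1 <= j <= n)%N ->
     (4 * u i.*2.+1 j.*2 - u i.*2.+2 j.*2.-1 - u i.*2.+2 j.*2.+1
      - u i.*2 j.*2.-1 - u i.*2 j.*2.+1) / hh ^+ 2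
     = 2^-1 * f (coord i.*2.+1) (coord j.*2)) /\
  (forall i j, (1 <= i <= n)%N -> (1 <= j <= n.-1)%N ->
     (4 * u i.*2 j.*2.+1 - u i.*2.-1 j.*2.+2 - u i.*2.+1 j.*2.+2
      - u i.*2.-1 j.*2 - u i.*2.+1 j.*2) / hh ^+ 2
     = 2^-1 * f (coord i.*2) (coord j.*2.+1)).

(* "exactly one solution": a solution exists, and any two solutions agree at
   every grid point (the unknowns are only the values at grid points). *)
Definition unique_grid_sol (S : (nat -> nat -> R) -> Prop) : Prop :=
  exists u, S u /\ forall v, S v -> forall K L, is_grid K L -> v K L = u K L.

(* max over all grid points of u, and max over boundary grid points of Q_b g
   ((2,1) is the boundary grid point (x_1, y_{1/2}), used as seed). *)
Definition max_grid (u : nat -> nat -> R) : R :=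
  \big[Num.max/u 2%N 1%N]_(p <- grid_pts) u p.1 p.2.
Definition max_bnd (g : R -> R -> R) : R :=
  \big[Num.max/Qb g 2%N 1%N]_(p <- bnd_pts) Qb g p.1 p.2.

End Grid.

Definition unit_square {R : realType} : set (R * R) :=
  [set p | 0 <= p.1 <= 1 /\ 0 <= p.2 <= 1].

(* Unique solvability: pairing the homogeneous seven-point equations with the
   unknowns and summing by parts gives
     kappa/4 * sum_vertices s^2 + sum (differences along horizontal lines)^2
                                + sum (differences along vertical lines)^2,
   where s is the sum of the two horizontal minus the two vertical edge values
   at a vertex.  For kappa > 0 this vanishes only for the zero grid function,
   so the square linear system is injective, hence solvable.
   Maximum principle: for 0 < kappa <= 4 all off-centre coefficients of the
   stencil are nonpositive and all coefficients sum to zero, so when f <= 0 a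
   maximum at an interior unknown (K, L) is also attained at (K+1, L+1);
   walking along this diagonal one reaches a boundary point.
   The five-point scheme is the case kappa = 4. *)

From Pilot Require Import Defs.
From HB Require Import structures.
From mathcomp Require Import all_boot all_order all_algebra.
From mathcomp Require Import all_classical all_reals all_analysis.
From mathcomp Require Import ring lra zify.
Import Order.TTheory GRing.Theory Num.Theory.
Import numFieldNormedType.Exports.
Set Implicit Arguments.
Unset Strict Implicit.
Unset Printing Implicit Defensive.

Local Open Scope ring_scope.

Section SummationByParts.
Variable R : comPzRingType.
Implicit Types x y : nat -> R.

Lemma sum_by_parts_adjacent N x y : x 0%N * y 0%N = 0 -> x N = 0 ->
  \sum_(i < N.+1) y i * (x i.-1 + x i) = \sum_(i < N.+1) x i * (y i + y i.+1).
Proof.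
move=> xy0 xN.
rewrite !(eq_bigr _ (fun i _ => mulrDr _ _ _)) !big_split /=.
rewrite big_ord_recl [X in _ = _ + X]big_ord_recr /= xN mul0r addr0 mulrC xy0 add0r.
by rewrite addrC; congr (_ + _); apply: eq_bigr => i _; rewrite mulrC.
Qed.

Lemma sum_mul_second_diff N x : x 0%N = 0 -> x N = 0 ->
  \sum_(i < N.+1) x i * (2 * x i - x i.-1 - x i.+1) = \sum_(i < N) (x i.+1 - x i) ^+ 2.
Proof.
move=> x0 xN.
have -> : \sum_(i < N.+1) x i * (2 * x i - x i.-1 - x i.+1) =
    \sum_(i < N.+1) x i * (x i - x i.-1) + \sum_(i < N.+1) x i * (x i - x i.+1).
  by rewrite -big_split /=; apply: eq_bigr => i _; ring.
rewrite big_ord_recl /= x0 mul0r add0r big_ord_recr /= xN mul0r addr0 -big_split /=.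
by apply: eq_bigr => i _; ring.
Qed.

End SummationByParts.

Section EnergyIdentity.
Variables (R : comPzRingType) (N : nat) (c : R) (a b : nat -> nat -> R).

(* [a i j] and [b i j] are the values at the midpoints [(2i+1, 2j)] of the
   horizontal and [(2i, 2j+1)] of the vertical edges, in doubled indices;
   [vertex_balance p q] compares the horizontal and vertical edges meeting at
   the vertex [(2p, 2q)]. *)
Definition vertex_balance p q := a p.-1 q + a p q - b p q.-1 - b p q.

Definition hedge_res i j :=
  c * (vertex_balance i j + vertex_balance i.+1 j) + (2 * a i j - a i.-1 j - a i.+1 j).

Definition vedge_res i j :=
  - c * (vertex_balance i j + vertex_balance i j.+1) + (2 * b i j - b i j.-1 - b i j.+1).

Hypotheses (a0 : forall j, a 0%N j = 0) (aN : forall j, a N j = 0)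
           (b0 : forall i, b i 0%N = 0) (bN : forall i, b i N = 0).

Lemma energy_identity :
  \sum_(i < N.+1) \sum_(j < N.+1) (a i j * hedge_res i j + b i j * vedge_res i j)
  = c * \sum_(p < N.+1) \sum_(q < N.+1) vertex_balance p q ^+ 2
    + \sum_(j < N.+1) \sum_(i < N) (a i.+1 j - a i j) ^+ 2
    + \sum_(i < N.+1) \sum_(j < N) (b i j.+1 - b i j) ^+ 2.
Proof.
set s := vertex_balance.
have balance_sqr : \sum_(p < N.+1) \sum_(q < N.+1) s p q ^+ 2 =
    \sum_(i < N.+1) \sum_(j < N.+1) a i j * (s i j + s i.+1 j)
  - \sum_(i < N.+1) \sum_(j < N.+1) b i j * (s i j + s i j.+1).
  have -> : \sum_(p < N.+1) \sum_(q < N.+1) s p q ^+ 2 =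
      \sum_(p < N.+1) \sum_(q < N.+1) s p q * (a p.-1 q + a p q)
    - \sum_(p < N.+1) \sum_(q < N.+1) s p q * (b p q.-1 + b p q).
    rewrite -sumrB; apply: eq_bigr => p _; rewrite -sumrB; apply: eq_bigr => q _.
    by rewrite /s /vertex_balance; ring.
  congr (_ - _).
    rewrite exchange_big [RHS]exchange_big /=; apply: eq_bigr => q _.
    by apply: (@sum_by_parts_adjacent _ N (a^~ q) (s^~ q)); rewrite /= ?a0 ?mul0r ?aN.
  apply: eq_bigr => p _.
  by apply: (@sum_by_parts_adjacent _ N (b p) (s p)); rewrite /= ?b0 ?mul0r ?bN.
have -> : \sum_(j < N.+1) \sum_(i < N) (a i.+1 j - a i j) ^+ 2 =
    \sum_(i < N.+1) \sum_(j < N.+1) a i j * (2 * a i j - a i.-1 j - a i.+1 j).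
  rewrite [RHS]exchange_big /=; apply: eq_bigr => j _.
  by rewrite (@sum_mul_second_diff _ N (a^~ j)).
have -> : \sum_(i < N.+1) \sum_(j < N) (b i j.+1 - b i j) ^+ 2 =
    \sum_(i < N.+1) \sum_(j < N.+1) b i j * (2 * b i j - b i j.-1 - b i j.+1).
  by apply: eq_bigr => i _; rewrite (@sum_mul_second_diff _ N (b i)).
rewrite balance_sqr mulrBr !mulr_sumr -!sumrB -!big_split /=.
apply: eq_bigr => i _; rewrite !mulr_sumr -!sumrB -!big_split /=.
by apply: eq_bigr => j _; rewrite /hedge_res /vedge_res /s; ring.
Qed.

End EnergyIdentity.

Section EnergyPositivity.
Variable R : realFieldType.

Lemma sum_sqr_diff_eq0 N (x : nat -> R) : x 0%N = 0 ->
  \sum_(i < N) (x i.+1 - x i) ^+ 2 = 0 -> forall i, (i <= N)%N -> x i = 0.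
Proof.
move=> x0 /eqP; rewrite psumr_eq0 => [/allP diff0|]; last by move=> *; exact: sqr_ge0.
elim=> [//|i IH] iN; move: (diff0 (Ordinal iN) (mem_index_enum _)).
by rewrite /= sqrf_eq0 subr_eq0 IH 1?ltnW // => /eqP.
Qed.

Lemma sum_sqr_sum_eq0 M N (F : nat -> nat -> R) :
  \sum_(k < M) \sum_(i < N) F k i ^+ 2 = 0 ->
  forall k, (k < M)%N -> \sum_(i < N) F k i ^+ 2 = 0.
Proof.
move=> /eqP; rewrite psumr_eq0 => [/allP sum0 k kM|]; last first.
  by move=> *; apply: sumr_ge0 => *; exact: sqr_ge0.
exact/eqP/(sum0 (Ordinal kM))/mem_index_enum.
Qed.

Lemma energy_eq0 N (c : R) (a b : nat -> nat -> R) : 0 < c ->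
  (forall j, a 0%N j = 0) -> (forall j, a N j = 0) ->
  (forall i, b i 0%N = 0) -> (forall i, b i N = 0) ->
  \sum_(i < N.+1) \sum_(j < N.+1)
     (a i j * hedge_res c a b i j + b i j * vedge_res c a b i j) = 0 ->
  forall i j, (i <= N)%N -> (j <= N)%N -> a i j = 0 /\ b i j = 0.
Proof.
move=> c0 a0 aN b0 bN; rewrite energy_identity //.
set S := \sum_(p < _) _; set A := \sum_(j < _) _; set B := \sum_(i < _) _.
have S0 : 0 <= S by do 2!apply: sumr_ge0 => ? _; exact: sqr_ge0.
have A0 : 0 <= A by do 2!apply: sumr_ge0 => ? _; exact: sqr_ge0.
have B0 : 0 <= B by do 2!apply: sumr_ge0 => ? _; exact: sqr_ge0.
have cS0 : 0 <= c * S by rewrite mulr_ge0 // ltW.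
move=> E; have {}A0 : A = 0 by lra.
have {}B0 : B = 0 by lra.
move=> i j iN jN; split.
  apply: (@sum_sqr_diff_eq0 N (a^~ j)) => //.
  exact: (@sum_sqr_sum_eq0 N.+1 N (fun j i => a i.+1 j - a i j)).
apply: (@sum_sqr_diff_eq0 N (b i)) => //.
exact: (@sum_sqr_sum_eq0 N.+1 N (fun i j => b i j.+1 - b i j)).
Qed.

End EnergyPositivity.

Section SevenPointOperator.
Variables (R : realType) (n : nat).
Implicit Types (k : R) (w : nat -> nat -> R).

(* Indices are doubled as in [Defs]: the equations of the first family sit at
   the interior midpoints [(2i+1, 2j)] of horizontal edges, those of the second
   family at the interior midpoints [(2i, 2j+1)] of vertical edges. *)
Definition hedge_int K L :=
  [&& odd K, (3 <= K)%N, (K < n.*2)%N, ~~ odd L, (2 <= L)%N & (L <= n.*2)%N].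

Definition vedge_int K L :=
  [&& ~~ odd K, (2 <= K)%N, (K <= n.*2)%N, odd L, (3 <= L)%N & (L < n.*2)%N].

Lemma hedge_intP K L : hedge_int K L ->
  exists i j, [/\ K = i.*2.+1, L = j.*2, (1 <= i <= n.-1)%N & (1 <= j <= n)%N].
Proof. by rewrite /hedge_int => KL; exists K./2, L./2; split; lia. Qed.

Lemma vedge_intP K L : vedge_int K L ->
  exists i j, [/\ K = i.*2, L = j.*2.+1, (1 <= i <= n)%N & (1 <= j <= n.-1)%N].
Proof. by rewrite /vedge_int => KL; exists K./2, L./2; split; lia. Qed.

Definition seven_lhsA k w i j :=
  c1 k * w (i.*2 + 3)%N j.*2 + c2 k * w i.*2.+1 j.*2 + c3 k * w i.*2.-1 j.*2
  + c4 k * (w i.*2.+2 j.*2.-1 + w i.*2.+2 j.*2.+1 + w i.*2 j.*2.-1 + w i.*2 j.*2.+1).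

Definition seven_lhsB k w i j :=
  c1 k * w i.*2 (j.*2 + 3)%N + c2 k * w i.*2 j.*2.+1 + c3 k * w i.*2 j.*2.-1
  + c4 k * (w i.*2.-1 j.*2.+2 + w i.*2.+1 j.*2.+2 + w i.*2.-1 j.*2 + w i.*2.+1 j.*2).

(* The left-hand side of the scheme at the interior unknowns, completed by the
   identity at all other indices, so that the scheme with its boundary condition
   becomes the square system [seven_op k u = seven_rhs f g]. *)
Definition seven_op k w K L :=
  if hedge_int K L then seven_lhsA k w K./2 L./2
  else if vedge_int K L then seven_lhsB k w K./2 L./2
  else w K L.

Lemma seven_op_hedge k w i j :
  hedge_int i.*2.+1 j.*2 -> seven_op k w i.*2.+1 j.*2 = seven_lhsA k w i j.
Proof. by move=> h; rewrite /seven_op h /= uphalf_double doubleK. Qed.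

Lemma seven_op_vedge k w i j :
  vedge_int i.*2 j.*2.+1 -> seven_op k w i.*2 j.*2.+1 = seven_lhsB k w i j.
Proof.
by move=> v; rewrite /seven_op v /hedge_int odd_double /= uphalf_double doubleK.
Qed.

Lemma seven_op_id k w K L :
  ~~ hedge_int K L -> ~~ vedge_int K L -> seven_op k w K L = w K L.
Proof. by rewrite /seven_op => /negbTE-> /negbTE->. Qed.

Lemma eq_seven_op k w1 w2 : w1 =2 w2 -> seven_op k w1 =2 seven_op k w2.
Proof. by move=> w12 K L; rewrite /seven_op /seven_lhsA /seven_lhsB !w12. Qed.

Lemma seven_opZ k a w K L :
  seven_op k (fun K L => a * w K L) K L = a * seven_op k w K L.
Proof. by rewrite /seven_op /seven_lhsA /seven_lhsB; do 2?case: ifP => _; ring. Qed.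

Lemma seven_opD k w1 w2 K L :
  seven_op k (fun K L => w1 K L + w2 K L) K L = seven_op k w1 K L + seven_op k w2 K L.
Proof. by rewrite /seven_op /seven_lhsA /seven_lhsB; do 2?case: ifP => _; ring. Qed.

Lemma seven_opB k w1 w2 K L :
  seven_op k (fun K L => w1 K L - w2 K L) K L = seven_op k w1 K L - seven_op k w2 K L.
Proof. by rewrite /seven_op /seven_lhsA /seven_lhsB; do 2?case: ifP => _; ring. Qed.

Definition hvals w i j := w i.*2.+1 j.*2.
Definition vvals w i j := w i.*2 j.*2.+1.

Lemma seven_lhsA_res k w i j : (1 <= i)%N -> (1 <= j)%N ->
  seven_lhsA k w i j = hedge_res (k / 4) (hvals w) (vvals w) i j.
Proof.
move=> i1 j1; rewrite /seven_lhsA /hedge_res /vertex_balance /hvals /vvals.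
have -> : (i.+1).*2.+1 = (i.*2 + 3)%N by lia.
have -> : (i.-1).*2.+1 = i.*2.-1 by lia.
have -> : (j.-1).*2.+1 = j.*2.-1 by lia.
by rewrite /c1 /c2 /c3 /c4 doubleS; field.
Qed.

Lemma seven_lhsB_res k w i j : (1 <= i)%N -> (1 <= j)%N ->
  seven_lhsB k w i j = vedge_res (k / 4) (hvals w) (vvals w) i j.
Proof.
move=> i1 j1; rewrite /seven_lhsB /vedge_res /vertex_balance /hvals /vvals.
have -> : (j.+1).*2.+1 = (j.*2 + 3)%N by lia.
have -> : (i.-1).*2.+1 = i.*2.-1 by lia.
have -> : (j.-1).*2.+1 = j.*2.-1 by lia.
by rewrite /c1 /c2 /c3 /c4 doubleS; field.
Qed.

Lemma seven_op_eq0 k w : 0 < k -> (forall K L, seven_op k w K L = 0) ->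
  forall K L, w K L = 0.
Proof.
move=> k0 op0.
have out0 K L : ~~ hedge_int K L -> ~~ vedge_int K L -> w K L = 0.
  by move=> hKL vKL; rewrite -(seven_op_id k) ?op0.
have vals0 : forall i j, (i <= n.+1)%N -> (j <= n.+1)%N ->
    hvals w i j = 0 /\ vvals w i j = 0.
  apply: (@energy_eq0 _ n.+1 (k / 4)); rewrite ?divr_gt0 //;
    try by move=> ?; apply: out0; rewrite /hedge_int /vedge_int; lia.
  apply: big1 => i _; apply: big1 => j _.
  have resA0 : hvals w i j * hedge_res (k / 4) (hvals w) (vvals w) i j = 0.
    have [hij|hij] := boolP (hedge_int i.*2.+1 j.*2).
      rewrite -seven_lhsA_res -?seven_op_hedge ?op0 ?mulr0 //;
        by move: hij; rewrite /hedge_int; lia.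
    by rewrite /hvals out0 ?mul0r // /vedge_int; lia.
  have resB0 : vvals w i j * vedge_res (k / 4) (hvals w) (vvals w) i j = 0.
    have [vij|vij] := boolP (vedge_int i.*2 j.*2.+1).
      rewrite -seven_lhsB_res -?seven_op_vedge ?op0 ?mulr0 //;
        by move: vij; rewrite /vedge_int; lia.
    by rewrite /vvals out0 ?mul0r // /hedge_int; lia.
  by rewrite resA0 resB0 addr0.
move=> K L; have [/hedge_intP [i [j [-> -> ? ?]]]|hKL] := boolP (hedge_int K L).
  by apply: (vals0 i j _ _).1; lia.
have [/vedge_intP [i [j [-> -> ? ?]]]|vKL] := boolP (vedge_int K L).
  by apply: (vals0 i j _ _).2; lia.
exact: out0.
Qed.

End SevenPointOperator.

Section SevenPointSolvability.
Variables (R : realType) (n : nat).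
Implicit Types (k : R) (f g : R -> R -> R) (u v : nat -> nat -> R).

Local Notation m := n.*2.+2.

Lemma bnd_not_int K L :
  is_bnd n K L -> ~~ hedge_int n K L && ~~ vedge_int n K L.
Proof. by rewrite /is_bnd /int_idx /hedge_int /vedge_int; lia. Qed.

Lemma grid_cases K L :
  is_grid n K L -> [|| hedge_int n K L, vedge_int n K L | is_bnd n K L].
Proof. by rewrite /is_grid /is_bnd /int_idx /half_idx /hedge_int /vedge_int; lia. Qed.

Lemma out_of_range K L : ~~ ((K < m)%N && (L < m)%N) ->
  [&& ~~ hedge_int n K L, ~~ vedge_int n K L & ~~ is_bnd n K L].
Proof. by rewrite /hedge_int /vedge_int /is_bnd /int_idx; lia. Qed.

Definition seven_rhs f g K L :=
  if hedge_int n K L || vedge_int n K L then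
    Defs.hh R n ^+ 2 / 2 * f (Defs.coord R n K) (Defs.coord R n L)
  else if is_bnd n K L then Qb n g K L else 0.

Lemma seven_point_of_op k f g u :
  (forall K L, seven_op n k u K L = seven_rhs f g K L) -> seven_point n k f g u.
Proof.
move=> opE; split; [|split] => [K L KL|i j hi hj|i j hi hj].
- have /andP [hKL vKL] := bnd_not_int KL.
  by rewrite -(seven_op_id k u hKL vKL) opE /seven_rhs (negbTE hKL) (negbTE vKL) KL.
- have hij : hedge_int n i.*2.+1 j.*2 by rewrite /hedge_int; lia.
  by have := opE i.*2.+1 j.*2; rewrite seven_op_hedge // /seven_rhs hij.
- have vij : vedge_int n i.*2 j.*2.+1 by rewrite /vedge_int; lia.
  by have := opE i.*2 j.*2.+1; rewrite seven_op_vedge // /seven_rhs vij orbT.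
Qed.

Definition grid_restrict u K L := if is_grid n K L then u K L else 0.

Lemma seven_op_grid_restrict k f g u : seven_point n k f g u ->
  forall K L, seven_op n k (grid_restrict u) K L = seven_rhs f g K L.
Proof.
move=> [bc [eqA eqB]] K L; rewrite /seven_rhs.
have [/hedge_intP [i [j [-> -> hi hj]]]|hKL] := boolP (hedge_int n K L).
  have hij : hedge_int n i.*2.+1 j.*2 by rewrite /hedge_int; lia.
  rewrite seven_op_hedge //= -(eqA i j) //.
  by rewrite /seven_lhsA /grid_restrict !ifT //; rewrite /is_grid /int_idx /half_idx; lia.
have [/vedge_intP [i [j [-> -> hi hj]]]|vKL] := boolP (vedge_int n K L).
  have vij : vedge_int n i.*2 j.*2.+1 by rewrite /vedge_int; lia.
  rewrite seven_op_vedge //= -(eqB i j) //.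
  by rewrite /seven_lhsB /grid_restrict !ifT //; rewrite /is_grid /int_idx /half_idx; lia.
rewrite seven_op_id // /grid_restrict.
have [KL|KL] := boolP (is_bnd n K L).
  by rewrite ifT ?bc //; move: KL; rewrite /is_grid /is_bnd /int_idx /half_idx; lia.
by case: ifP => // /grid_cases; rewrite (negbTE hKL) (negbTE vKL) (negbTE KL).
Qed.

Lemma seven_point_grid_unique k f g u v : 0 < k ->
  seven_point n k f g u -> seven_point n k f g v ->
  forall K L, is_grid n K L -> u K L = v K L.
Proof.
move=> k0 /seven_op_grid_restrict uE /seven_op_grid_restrict vE K L KL.
suff /(_ K L) : forall K L, grid_restrict u K L - grid_restrict v K L = 0.
  by rewrite /grid_restrict KL => /subr0_eq.
apply: (@seven_op_eq0 R n k (fun K L => grid_restrict u K L - grid_restrict v K L) k0).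
by move=> K' L'; rewrite seven_opB uE vE subrr.
Qed.

Definition mx_fun (X : 'M[R]_m) K L :=
  if (K < m)%N && (L < m)%N then X (inord K) (inord L) else 0.

Definition seven_mx k (X : 'M[R]_m) : 'M[R]_m :=
  \matrix_(i, j) seven_op n k (mx_fun X) i j.

Fact seven_mx_semilinear k : semilinear (seven_mx k).
Proof.
split=> [a X|X Y]; apply/matrixP => i j; rewrite !mxE.
  rewrite -seven_opZ; apply: eq_seven_op => K L; rewrite /mx_fun.
  by case: ifP; rewrite ?mxE ?mulr0.
rewrite -seven_opD; apply: eq_seven_op => K L; rewrite /mx_fun.
by case: ifP; rewrite ?mxE ?addr0.
Qed.

HB.instance Definition _ k :=
  GRing.isSemilinear.Build R 'M[R]_m 'M[R]_m _ (seven_mx k) (seven_mx_semilinear k).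

Lemma seven_mx_eq0 k X : 0 < k -> seven_mx k X = 0 -> X = 0.
Proof.
move=> k0 /matrixP X0; apply/matrixP => i j; rewrite mxE.
have := @seven_op_eq0 R n k (mx_fun X) k0 _ i j.
rewrite /mx_fun !ltn_ord !inord_val; apply=> K L.
have [/andP [Km Lm]|out] := boolP ((K < m)%N && (L < m)%N).
  by have := X0 (inord K) (inord L); rewrite !mxE !inordK.
have /and3P [hKL vKL _] := out_of_range out.
by rewrite seven_op_id // /mx_fun (negbTE out).
Qed.

Lemma seven_point_exists k f g : 0 < k -> exists u, seven_point n k f g u.
Proof.
move=> k0; pose F := linfun (seven_mx k).
have F_inj : lker F == 0%VS.
  by apply/lker0P/raddf_inj => Y /=; rewrite lfunE; exact: seven_mx_eq0.
pose B : 'M[R]_m := \matrix_(i, j) seven_rhs f g i j.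
pose X := (F^-1)%VF B.
have /matrixP FX : seven_mx k X = B.
  by have := lker0_lfunVK F_inj B; rewrite {1}/F lfunE.
exists (mx_fun X); apply: seven_point_of_op => K L.
have [/andP [Km Lm]|out] := boolP ((K < m)%N && (L < m)%N).
  by have := FX (inord K) (inord L); rewrite !mxE !inordK.
have /and3P [hKL vKL bKL] := out_of_range out.
rewrite seven_op_id // /mx_fun /seven_rhs (negbTE out).
by rewrite (negbTE hKL) (negbTE vKL) (negbTE bKL).
Qed.

Lemma seven_point_unique_grid_sol k f g : 0 < k ->
  unique_grid_sol n (seven_point n k f g).
Proof.
move=> k0; have [u su] := seven_point_exists f g k0.
by exists u; split=> // v sv; exact: seven_point_grid_unique k0 sv su.
Qed.

End SevenPointSolvability.

Lemma bigmax_seq_attained d (T : orderType d) (I : eqType) (A : pred I)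
    (s : seq I) (i0 : I) (F : I -> T) :
  A i0 -> {subset s <= A} -> exists2 i, A i & \big[Order.max/F i0]_(j <- s) F j = F i.
Proof.
move=> Ai0 sA; rewrite big_seq.
elim/big_ind: _ => [|x y [i Ai ->] [j Aj ->]|i /sA Ai]; [by exists i0| |by exists i].
by rewrite maxEle; case: ifP => _; [exists j|exists i].
Qed.

Section MaxPrinciple.
Variables (R : realType) (n : nat).
Implicit Types (k : R) (f g : R -> R -> R) (u : nat -> nat -> R).

Lemma max_grid_ge u K L : is_grid n K L -> u K L <= max_grid n u.
Proof.
move=> KL; apply: (le_bigmax_seq _ (K, L) xpredT (fun p => u p.1 p.2)) => //.
rewrite mem_filter KL; apply: allpairs_f; rewrite mem_iota;
  by move: KL; rewrite /is_grid /int_idx /half_idx; lia.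
Qed.

Lemma max_bnd_ge g K L : is_bnd n K L -> Qb n g K L <= max_bnd n g.
Proof.
move=> KL; apply: (le_bigmax_seq _ (K, L) xpredT (fun p => Qb n g p.1 p.2)) => //.
rewrite mem_filter KL; apply: allpairs_f; rewrite mem_iota;
  by move: KL; rewrite /is_bnd /int_idx; lia.
Qed.

Lemma max_grid_attained u : (1 <= n)%N ->
  exists2 p : nat * nat, is_grid n p.1 p.2 & max_grid n u = u p.1 p.2.
Proof.
move=> n1.
apply: (bigmax_seq_attained (A := fun p => is_grid n p.1 p.2) (i0 := (2, 1)%N)).
  by rewrite /= /is_grid /int_idx /half_idx; lia.
by move=> p; rewrite mem_filter => /andP [].
Qed.

Lemma coord_in01 K : (1 < K < n.*2.+1)%N -> 0 < Defs.coord R n K < 1.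
Proof.
move=> K01; rewrite /Defs.coord /Defs.hh.
have n0 : (0 : R) < n%:R by rewrite ltr0n; lia.
have K2 : (2 : R) <= K%:R by rewrite (ler_nat R 2); lia.
have K2n : (K%:R : R) <= 2 * n%:R by rewrite -natrM ler_nat; lia.
apply/andP; split; first by apply: divr_gt0 => //; lra.
by rewrite ltr_pdivrMr // mul1r; lra.
Qed.

Lemma source_term_le0 f K L :
  (forall x y : R, 0 < x < 1 -> 0 < y < 1 -> f x y <= 0) ->
  (1 < K < n.*2.+1)%N -> (1 < L < n.*2.+1)%N ->
  Defs.hh R n ^+ 2 / 2 * f (Defs.coord R n K) (Defs.coord R n L) <= 0.
Proof.
move=> fneg K01 L01; apply: mulr_ge0_le0; first by rewrite divr_ge0 ?sqr_ge0.
by apply: fneg; apply: coord_in01.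
Qed.

(* The equation reads [(1 - k/4) ((M - uR) + (M - uL)) + k/4 \sum_i (M - d_i) = r],
   a sum of nonnegative terms except possibly [k/4 (M - d2)]. *)
Lemma seven_stencil_max k M uR uL d1 d2 d3 d4 r : 0 < k <= 4 ->
  c1 k * uR + c2 k * M + c3 k * uL + c4 k * (d1 + d2 + d3 + d4) = r -> r <= 0 ->
  uR <= M -> uL <= M -> d1 <= M -> d3 <= M -> d4 <= M -> M <= d2.
Proof.
rewrite /c1 /c2 /c3 /c4 => /andP [k0 k4] E r0 uRM uLM d1M d3M d4M.
have pR : 0 <= (1 - k / 4) * (M - uR) by apply: mulr_ge0; lra.
have pL : 0 <= (1 - k / 4) * (M - uL) by apply: mulr_ge0; lra.
have p1 : 0 <= k / 4 * (M - d1) by apply: mulr_ge0; lra.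
have p3 : 0 <= k / 4 * (M - d3) by apply: mulr_ge0; lra.
have p4 : 0 <= k / 4 * (M - d4) by apply: mulr_ge0; lra.
have : k / 4 * (M - d2) <= 0 by lra.
by rewrite pmulr_rle0 ?subr_le0 // divr_gt0.
Qed.

Section Propagation.
Variables (k : R) (f g : R -> R -> R) (u : nat -> nat -> R).
Hypotheses (k04 : 0 < k <= 4) (su : seven_point n k f g u)
  (fneg : forall x y : R, 0 < x < 1 -> 0 < y < 1 -> f x y <= 0).

Lemma max_moves_diag K L : is_grid n K L -> ~~ is_bnd n K L ->
  u K L = max_grid n u -> is_grid n K.+1 L.+1 /\ u K.+1 L.+1 = max_grid n u.
Proof.
have [_ [eqA eqB]] := su; move=> KL bKL uM.
have ge := max_grid_ge u; set M := max_grid n u in uM ge *.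
have := grid_cases KL; rewrite (negbTE bKL) orbF.
case/orP => [/hedge_intP|/vedge_intP] [i [j [eK eL hi hj]]]; subst K L.
- have KL1 : is_grid n i.*2.+2 j.*2.+1 by rewrite /is_grid /int_idx /half_idx; lia.
  split=> //; apply/le_anti; rewrite ge //=.
  have := eqA i j hi hj; rewrite uM => /(seven_stencil_max k04) -> //;
    try by apply: ge; rewrite /is_grid /int_idx /half_idx; lia.
  by apply: source_term_le0 => //; lia.
- have KL1 : is_grid n i.*2.+1 j.*2.+2 by rewrite /is_grid /int_idx /half_idx; lia.
  split=> //; apply/le_anti; rewrite ge //=.
  have := eqB i j hi hj; rewrite uM => /(seven_stencil_max k04) -> //;
    try by apply: ge; rewrite /is_grid /int_idx /half_idx; lia.
  by apply: source_term_le0 => //; lia.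
Qed.

Lemma seven_point_max_principle : (1 <= n)%N -> max_grid n u <= max_bnd n g.
Proof.
move=> n1; have [bc _] := su; have [[K L] /= KL uM] := max_grid_attained u n1.
suff walk : forall d K L, (n.*2.+2 <= K + d)%N -> is_grid n K L ->
    u K L = max_grid n u -> max_grid n u <= max_bnd n g.
  by apply: (walk n.*2.+2 K L) => //; rewrite leq_addl.
elim=> [|d IH] {}K {}L Kd {}KL {}uM.
  by move: KL Kd; rewrite addn0 /is_grid /int_idx /half_idx; lia.
have [bKL|bKL] := boolP (is_bnd n K L); first by rewrite -uM bc ?max_bnd_ge.
have [KL1 uM1] := max_moves_diag KL bKL uM.
by apply: (IH K.+1 L.+1) => //; rewrite addSn -addnS.
Qed.

End Propagation.

End MaxPrinciple.

Lemma five_stencil_seven4 (R : realType) (h uR uC uL d1 d2 d3 d4 F : R) : h != 0 ->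
  ((4 * uC - d1 - d2 - d3 - d4) / h ^+ 2 = 2^-1 * F) <->
  (c1 4 * uR + c2 4 * uC + c3 4 * uL + c4 4 * (d1 + d2 + d3 + d4) = h ^+ 2 / 2 * F).
Proof.
move=> h0; have h20 : h ^+ 2 != 0 by rewrite expf_neq0.
have -> : c1 4 * uR + c2 4 * uC + c3 4 * uL + c4 4 * (d1 + d2 + d3 + d4)
    = 4 * uC - d1 - d2 - d3 - d4 by rewrite /c1 /c2 /c3 /c4; field.
split=> [/(congr1 ( *%R^~ (h ^+ 2)))|->]; last by field.
by rewrite mulfVK // => ->; field.
Qed.

Lemma five_point_seven_point4 (R : realType) (n : nat) (f g : R -> R -> R) :
  (1 <= n)%N ->
  five_point n f g = seven_point n 4 f g.
Proof.
move=> n1; have h0 : Defs.hh R n != 0 by rewrite invr_eq0 pnatr_eq0 -lt0n.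
apply/funext => u; apply/propext.
by split=> -[bc [eqA eqB]]; do 2!split=> //; move=> i j hi hj;
  apply/(five_stencil_seven4 _ _ _ _ _ _ _ _ h0);
  [exact: eqA|exact: eqB|exact: eqA|exact: eqB].
Qed.

Local Open Scope classical_set_scope.

Theorem theorem5p2 (R : realType) (n : nat) (f g : R -> R -> R) :
  (2 <= n)%N ->
  {within @unit_square R, continuous (fun p : R * R => f p.1 p.2)} ->
  (* g in H^{1/2}(boundary) replaced by: g integrable on each side *)
  (@lebesgue_measure R).-integrable `[0, 1] (fun s => (g s 0)%:E) ->
  (@lebesgue_measure R).-integrable `[0, 1] (fun s => (g s 1)%:E) ->
  (@lebesgue_measure R).-integrable `[0, 1] (fun s => (g 0 s)%:E) ->
  (@lebesgue_measure R).-integrable `[0, 1] (fun s => (g 1 s)%:E) ->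
  (forall kappa : R, 0 < kappa -> unique_grid_sol n (seven_point n kappa f g)) /\
  unique_grid_sol n (five_point n f g) /\
  ((forall x y : R, 0 < x < 1 -> 0 < y < 1 -> f x y <= 0) ->
     (forall kappa : R, 0 < kappa <= 4 -> forall u, seven_point n kappa f g u ->
        max_grid n u <= max_bnd n g) /\
     (forall u, five_point n f g u -> max_grid n u <= max_bnd n g)).
Proof.
move=> n2 _ _ _ _ _; have n1 : (1 <= n)%N by lia.
rewrite five_point_seven_point4 //.
split; first by move=> k; exact: seven_point_unique_grid_sol.
split; first by apply: seven_point_unique_grid_sol; rewrite ltr0n.
move=> fneg; split=> [k k04 u su|u su].
  exact: seven_point_max_principle k04 su fneg n1.
by apply: (seven_point_max_principle _ su fneg n1); rewrite ltr0n lexx.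
Qed.
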